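(* Let $G$, $z$, $g_1,\dots,g_{2r}$ be as in the context. Every element $g\in G\setminus\{1,z\}$ can be written as $g=z^{j}g_{s_1}g_{s_2}\cdots g_{s_t}$ with $j\in\{0,1\}$ and $1\le s_1<\dots<s_t\le 2r$, uniquely. For $\sigma\in S_{2r}$ define $\tilde\sigma:G\to G$ by $1^{\tilde\sigma}=1$, $z^{\tilde\sigma}=z$ and $(z^{j}g_{s_1}\cdots g_{s_t})^{\tilde\sigma}=z^{j}g_{s_1^{\sigma}}\cdots g_{s_t^{\sigma}}$. Then each $\tilde\sigma$ is an automorphism of $G$, and the map $\sigma\mapsto\tilde\sigma$ is an injective group homomorphism $S_{2r}\to\mathrm{Aut}(G)$; in particular $S_{2r}$ embeds in $\mathrm{Aut}(G)$ as a group of automorphisms permuting $\{g_1,\dots,g_{2r}\}$.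
   Context: Let $r\ge1$ and $G$ an extraspecial $2$-group of order $2^{2r+1}$ (i.e. $|Z(G)|=2$ and $G/Z(G)\cong\mathbb{Z}_2^{2r}$), with $Z=Z(G)=\langle z\rangle$. Identify $Z$ with $\mathbb{F}_2$ and view $G/Z$ as an $\mathbb{F}_2$-space with quadratic form $Q(Zx)=x^2$ and associated bilinear form $B(Zx,Zy)=[x,y]$. Assume $G/Z$ has a symmetric basis $\{Zg_1,\dots,Zg_{2r}\}$, i.e. $Q(Zg_i)=0$ for all $i$ and $B(Zg_i,Zg_j)=1$ for $i\ne j$; thus $g_i^2=1$ and $g_ig_j=g_jg_iz$ for $i\ne j$. Permutations act on the right. *)

From HB Require Import structures.
From mathcomp Require Import all_boot all_fingroup all_solvable.
Set Implicit Arguments. Unset Strict Implicit. Unset Printing Implicit Defensive.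
Local Open Scope group_scope.

(* The normal-form word  z^j g_{s_1} ... g_{s_t}  with s_1 < ... < s_t the
   elements of S (the big product over ordinals runs in increasing order). *)
Definition ext_word (gT : finGroupType) (n : nat) (z : gT) (g : 'I_n -> gT)
    (j : bool) (S : {set 'I_n}) : gT :=
  z ^+ j * \prod_(s < n | s \in S) g s.

(* On elements having a normal form it uses (a chosen) normal form; the theorem
   asserts uniqueness of normal forms, so this is the paper's map on G.
   Outside the set of words it is the identity (irrelevant for G). *)
Definition sigma_tilde (gT : finGroupType) (n : nat) (z : gT) (g : 'I_n -> gT)
    (sigma : 'S_n) (x : gT) : gT :=
  if [pick p : bool * {set 'I_n} | x == ext_word z g p.1 p.2] is Some p
  then ext_word z (fun s => g (sigma s)) p.1 p.2
  else x.

From HB Require Import structures.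
From mathcomp Require Import all_boot all_fingroup all_solvable.
Local Open Scope group_scope.

Set Implicit Arguments. Unset Strict Implicit. Unset Printing Implicit Defensive.

(* Under the relations g_i^2 = 1, g_i g_j = g_j g_i z (i <> j) with z central
   of order 2, reordering a product of generators only costs a power of z and
   g_t^2 cancels, so every product of normal-form words is again a normal-form
   word, with exponent and index set depending only on the combinatorics of
   the indices.  Hence the 2^(2r+1) words form a subgroup containing Z(G) and
   the g_i, so they exhaust G and are pairwise distinct by counting.  Renaming
   the generators by sigma preserves the relations and therefore the
   multiplication table of words, which makes sigma~ a homomorphism. *)

Section WordArithmetic.

Variables (gT : finGroupType) (n : nat) (z : gT).

Definition symmetric_rels (h : 'I_n -> gT) : Prop :=
  [/\ forall i, h i ^+ 2 = 1,
      forall i j, i != j -> h i * h j = h j * h i * z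
    & forall i, commute z (h i)].

Lemma ext_word0 (h : 'I_n -> gT) : ext_word z h false set0 = 1.
Proof. by rewrite /ext_word big_set0 mulg1. Qed.

Lemma ext_word_z (h : 'I_n -> gT) : ext_word z h true set0 = z.
Proof. by rewrite /ext_word big_set0 mulg1. Qed.

Lemma ext_word1 (h : 'I_n -> gT) i : ext_word z h false [set i] = h i.
Proof. by rewrite /ext_word mul1g big_set1. Qed.

Lemma eq_ext_word (h1 h2 : 'I_n -> gT) j S :
  h1 =1 h2 -> ext_word z h1 j S = ext_word z h2 j S.
Proof. by move=> eq_h; rewrite /ext_word (eq_bigr _ (fun i _ => eq_h i)). Qed.

Variable h : 'I_n -> gT.
Hypothesis hrels : symmetric_rels h.

Lemma commute_expz c i : commute (z ^+ c) (h i).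
Proof. by case: hrels => _ _ hz; apply/commute_sym/commuteX/commute_sym. Qed.

Lemma commute_expz_prod c (s : seq 'I_n) (P : pred 'I_n) :
  commute (z ^+ c) (\prod_(i <- s | P i) h i).
Proof.
apply: (big_ind (commute (z ^+ c))); first exact: commute1.
  exact: commuteM.
by move=> i _; apply: commute_expz.
Qed.

Lemma prod_mulg_notin t (s : seq 'I_n) : t \notin s ->
  \prod_(i <- s) h i * h t = z ^+ size s * h t * \prod_(i <- s) h i.
Proof.
have [_ hswap hz] := hrels.
elim: s => [|x s IHs] /=; first by rewrite big_nil expg0 !mul1g mulg1.
rewrite inE negb_or => /andP[ntx nts].
rewrite big_cons -mulgA IHs // !mulgA -(commute_expz (size s) x).
rewrite -(mulgA (z ^+ size s)) hswap 1?eq_sym //.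
by rewrite -(commuteM (hz t) (hz x)) expgSr !mulgA.
Qed.

End WordArithmetic.

Section NormalForm.

Variables (gT : finGroupType) (n : nat) (z : gT).
Hypothesis z2 : z ^+ 2 = 1.

Lemma perm_prod_expz (s1 s2 : seq 'I_n) : perm_eq s1 s2 -> uniq s2 ->
  exists c, forall h, symmetric_rels z h ->
    \prod_(i <- s2) h i = z ^+ c * \prod_(i <- s1) h i.
Proof.
elim: s1 s2 => [|x s1 IHs] s2 eq_s12 uniq_s2.
  rewrite perm_sym in eq_s12; move/perm_nilP: eq_s12 => ->.
  by exists 0 => h _; rewrite expg0 mul1g.
have x_s2 : x \in s2 by rewrite -(perm_mem eq_s12) mem_head.
move: eq_s12 uniq_s2; case/splitPr: x_s2 => a b eq_s12 uniq_s2.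
have eq_x : perm_eq (x :: s1) (x :: (a ++ b)).
  by rewrite (perm_trans eq_s12) // -cat1s perm_catCA.
have /andP[xNab uniq_ab] : uniq (x :: a ++ b).
  by rewrite -(perm_uniq eq_x) (perm_uniq eq_s12).
rewrite perm_cons in eq_x; have [c IHc] := IHs _ eq_x uniq_ab.
exists (size a + c) => h hrels.
rewrite big_cat big_cons /= mulgA (prod_mulg_notin hrels) //; last first.
  by apply: contra xNab; rewrite mem_cat => ->.
rewrite big_cons -!mulgA -big_cat IHc // !mulgA.
by rewrite -(mulgA _ (h x)) -(commute_expz hrels c x) expgD !mulgA.
Qed.

Definition enum_set (S : {set 'I_n}) := [seq i <- index_enum 'I_n | i \in S].

Lemma big_enum_set (h : 'I_n -> gT) (S : {set 'I_n}) :
  \prod_(i < n | i \in S) h i = \prod_(i <- enum_set S) h i.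
Proof. by rewrite big_filter. Qed.

Lemma enum_set_uniq (S : {set 'I_n}) : uniq (enum_set S).
Proof. by rewrite filter_uniq // index_enum_uniq. Qed.

Lemma mem_enum_set (S : {set 'I_n}) : enum_set S =i S.
Proof. by move=> i; rewrite mem_filter mem_index_enum andbT. Qed.

Lemma prod_set_mulg_nf (S : {set 'I_n}) t : exists c (S' : {set 'I_n}),
  forall h, symmetric_rels z h ->
    \prod_(i < n | i \in S) h i * h t = z ^+ c * \prod_(i < n | i \in S') h i.
Proof.
have [tS | tNS] := boolP (t \in S).
  have eq_S : perm_eq (rcons (enum_set (S :\ t)) t) (enum_set S).
    apply: uniq_perm; last 1 first.
    - move=> i; rewrite mem_rcons inE !mem_enum_set in_setD1.
      by case: eqP => [->|].
    - by rewrite rcons_uniq enum_set_uniq mem_enum_set in_setD1 eqxx.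
    - exact: enum_set_uniq.
  have [c Hc] := perm_prod_expz eq_S (enum_set_uniq S).
  exists c, (S :\ t) => h hrels; have [hsq _ _] := hrels.
  rewrite !big_enum_set Hc // -cats1 big_cat big_seq1 -!mulgA.
  by rewrite -expg2 hsq mulg1.
have uniq_St : uniq (rcons (enum_set S) t).
  by rewrite rcons_uniq mem_enum_set tNS enum_set_uniq.
have eq_S : perm_eq (enum_set (t |: S)) (rcons (enum_set S) t).
  apply: uniq_perm; rewrite ?enum_set_uniq //.
  by move=> i; rewrite mem_rcons inE !mem_enum_set in_setU1.
have [c Hc] := perm_prod_expz eq_S uniq_St.
exists c, (t |: S) => h hrels.
by rewrite !big_enum_set -Hc // -cats1 big_cat big_seq1.
Qed.

Lemma prod_seq_nf (s : seq 'I_n) : exists c (S : {set 'I_n}),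
  forall h, symmetric_rels z h ->
    \prod_(i <- s) h i = z ^+ c * \prod_(i < n | i \in S) h i.
Proof.
elim/last_ind: s => [|s t [c [S IHs]]].
  by exists 0, set0 => h _; rewrite big_nil big_set0 mulg1.
have [c' [S' Ht]] := prod_set_mulg_nf S t.
exists (c + c'), S' => h hrels.
by rewrite -cats1 big_cat big_seq1 /= IHs // -mulgA Ht // mulgA expgD.
Qed.

Lemma ext_word_mul j1 (S1 : {set 'I_n}) j2 (S2 : {set 'I_n}) :
  exists j S, forall h, symmetric_rels z h ->
    ext_word z h j1 S1 * ext_word z h j2 S2 = ext_word z h j S.
Proof.
have [c [S Hc]] := prod_seq_nf (enum_set S1 ++ enum_set S2).
exists (odd (j1 + j2 + c)), S => h hrels.
rewrite /ext_word -modn2 expg_mod // !expgD -!mulgA -Hc //.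
rewrite big_cat -!big_enum_set.
by rewrite (mulgA _ (z ^+ j2)) -(commute_expz_prod hrels j2) -!mulgA.
Qed.

End NormalForm.

Section ExtraspecialAut.

Variables (gT : finGroupType) (G : {group gT}) (n : nat) (z : gT).
Variable g : 'I_n -> gT.
Hypotheses (hG : #|G| = (2 ^ n.+1)%N) (hZ : 'Z(G) = <[z]>) (hz : #[z] = 2%N).
Hypotheses (hgG : forall i, g i \in G) (hsq : forall i, g i ^+ 2 = 1).
Hypothesis hcomm : forall i j, i != j -> [~ g i, g j] = z.
Hypothesis hspan : <<[set coset 'Z(G) (g i) | i : 'I_n]>> = G / 'Z(G).

Let zZ : z \in 'Z(G). Proof. by rewrite hZ cycle_id. Qed.
Let zG : z \in G. Proof. exact: subsetP (center_sub G) z zZ. Qed.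
Let z2 : z ^+ 2 = 1. Proof. by rewrite -hz expg_order. Qed.

Let ext_word_in (h : 'I_n -> gT) j S :
  (forall i, h i \in G) -> ext_word z h j S \in G.
Proof. by move=> hG'; rewrite groupM ?groupX // group_prod. Qed.

Lemma ext_word_morph (f : {morphism G >-> gT}) (h : 'I_n -> gT) j S :
  f z = z -> (forall i, h i \in G) ->
  f (ext_word z h j S) = ext_word z (fun i => f (h i)) j S.
Proof.
move=> fz hG'; rewrite /ext_word morphM ?groupX ?group_prod //.
by rewrite morphX // morph_prod // fz.
Qed.

Lemma symmetric_rels_reindex (p : 'I_n -> 'I_n) :
  injective p -> symmetric_rels z (fun i => g (p i)).
Proof.
move=> injp; split=> [i|i j ij|i]; first exact: hsq.
  by rewrite commgC hcomm ?(inj_eq injp).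
by case/centerP: zZ => _; apply.
Qed.

Let grels : symmetric_rels z g. Proof. exact: (@symmetric_rels_reindex id). Qed.

Definition ext_words := [set ext_word z g p.1 p.2 | p : bool * {set 'I_n}].

Lemma group_set_ext_words : group_set ext_words.
Proof.
apply/group_setP; split.
  by apply/imsetP; exists (false, set0); rewrite ?ext_word0.
move=> _ _ /imsetP[[j1 S1] _ ->] /imsetP[[j2 S2] _ ->] /=.
have [j [S mulE]] := ext_word_mul z2 j1 S1 j2 S2.
by rewrite mulE //; apply/imsetP; exists (j, S).
Qed.

Canonical ext_words_group := Group group_set_ext_words.

Lemma ext_wordsE : ext_words = G.
Proof.
have sWG : ext_words \subset G.
  by apply/subsetP => _ /imsetP[p _ ->]; apply: ext_word_in.
have sZW : 'Z(G) \subset ext_words_group.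
  rewrite hZ cycle_subG.
  by apply/imsetP; exists (true, set0); rewrite ?ext_word_z.
apply/eqP; rewrite eqEsubset sWG /=.
rewrite -(quotientSGK (normal_norm (center_normal G)) sZW) -hspan gen_subG.
apply/subsetP => _ /imsetP[i _ ->]; apply: mem_quotient.
by apply/imsetP; exists (false, [set i]); rewrite ?ext_word1.
Qed.

Lemma ext_word_surj x : x \in G -> exists j S, x = ext_word z g j S.
Proof. by rewrite -ext_wordsE => /imsetP[p _ ->]; exists p.1, p.2. Qed.

Lemma ext_word_inj j1 S1 j2 S2 :
  ext_word z g j1 S1 = ext_word z g j2 S2 -> j1 = j2 /\ S1 = S2.
Proof.
have /imset_injP inj_words : #|ext_words| == #|{: bool * {set 'I_n}}|.
  rewrite ext_wordsE hG card_prod card_bool expnS -(cardsT {set 'I_n}).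
  by rewrite -powersetT card_powerset cardsT card_ord.
by move=> /(inj_words (j1, S1) (j2, S2)) -/(_ isT isT) [-> ->].
Qed.

Lemma gen_inj : injective g.
Proof.
move=> i k; rewrite -(ext_word1 z g i) -(ext_word1 z g k).
by case/ext_word_inj=> _ /set1_inj.
Qed.

Section SigmaTilde.

Variable sigma : 'S_n.

Lemma sigma_tildeE j S :
  sigma_tilde z g sigma (ext_word z g j S) =
  ext_word z (fun i => g (sigma i)) j S.
Proof.
rewrite /sigma_tilde; case: pickP => [p /eqP/ext_word_inj[-> ->] // | no_nf].
by have := no_nf (j, S); rewrite /= eqxx.
Qed.

Lemma sigma_tilde_in x : x \in G -> sigma_tilde z g sigma x \in G.
Proof. by case/ext_word_surj=> j [S ->]; rewrite sigma_tildeE ext_word_in. Qed.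

Lemma sigma_tildeM : {in G &, {morph sigma_tilde z g sigma : x y / x * y}}.
Proof.
move=> _ _ /ext_word_surj[j1 [S1 ->]] /ext_word_surj[j2 [S2 ->]].
have [j [S mulE]] := ext_word_mul z2 j1 S1 j2 S2.
rewrite (mulE _ grels) !sigma_tildeE mulE //.
exact/symmetric_rels_reindex/perm_inj.
Qed.

Canonical sigma_tilde_morphism := Morphism sigma_tildeM.

Lemma sigma_tilde_gen i : sigma_tilde z g sigma (g i) = g (sigma i).
Proof. by rewrite -(ext_word1 z g i) sigma_tildeE ext_word1. Qed.

Lemma sigma_tilde_z : sigma_tilde z g sigma z = z.
Proof.
by rewrite -[X in sigma_tilde _ _ _ X](ext_word_z z g) sigma_tildeE ext_word_z.
Qed.

End SigmaTilde.

Lemma sigma_tilde1 : {in G, sigma_tilde z g 1 =1 id}.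
Proof.
move=> _ /ext_word_surj[j [S ->]].
by rewrite sigma_tildeE; apply: eq_ext_word => i; rewrite perm1.
Qed.

Lemma sigma_tilde_permM sigma tau : {in G, forall x,
  sigma_tilde z g (sigma * tau) x =
  sigma_tilde z g tau (sigma_tilde z g sigma x)}.
Proof.
move=> _ /ext_word_surj[j [S ->]].
have tau_z : sigma_tilde_morphism tau z = z := sigma_tilde_z tau.
rewrite !sigma_tildeE (ext_word_morph _ _ tau_z) //.
by apply: eq_ext_word => i; rewrite /= sigma_tilde_gen permM.
Qed.

Lemma sigma_tildeK sigma :
  {in G, cancel (sigma_tilde z g sigma) (sigma_tilde z g sigma^-1)}.
Proof. by move=> x xG; rewrite -sigma_tilde_permM ?mulgV ?sigma_tilde1. Qed.

Lemma sigma_tilde_aut sigma :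
  exists2 a : {perm gT}, a \in Aut G & {in G, a =1 sigma_tilde z g sigma}.
Proof.
have injf : 'injm (sigma_tilde_morphism sigma).
  by apply/injmP; apply: can_in_inj (sigma_tildeK sigma).
have imf : sigma_tilde_morphism sigma @* G = G.
  apply/(morphim_fixP injf) => //; rewrite morphimEdom.
  by apply/subsetP => _ /imsetP[x xG ->]; apply: sigma_tilde_in.
by exists (aut injf imf); [apply: Aut_aut | apply: autE].
Qed.

Lemma sigma_tilde_inj sigma tau :
  {in G, sigma_tilde z g sigma =1 sigma_tilde z g tau} -> sigma = tau.
Proof.
move=> eq_st; apply/permP => i; apply: gen_inj.
by rewrite -!sigma_tilde_gen eq_st.
Qed.

End ExtraspecialAut.

Theorem theorem4p1 (gT : finGroupType) (G : {group gT}) (r : nat) (z : gT)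
    (g : 'I_(2 * r) -> gT)
    (hr : (1 <= r)%N)
    (hG : #|G| = (2 ^ (2 * r).+1)%N)
    (hZ : 'Z(G) = <[z]>) (hz : #[z] = 2%N)
    (hab : 2.-abelem (G / 'Z(G)))
    (hgG : forall i, g i \in G)
    (hsq : forall i, g i ^+ 2 = 1)
    (hcomm : forall i j, i != j -> [~ g i, g j] = z)
    (hspan : <<[set coset 'Z(G) (g i) | i : 'I_(2 * r)]>> = G / 'Z(G))
    (hindep : forall S : {set 'I_(2 * r)},
        \prod_(i < 2 * r | i \in S) coset 'Z(G) (g i) = 1 -> S = set0) :
  (* unique normal form *)
  (forall x, x \in G -> exists j S, x = ext_word z g j S) /\
  (forall j1 S1 j2 S2, ext_word z g j1 S1 = ext_word z g j2 S2 ->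
       j1 = j2 /\ S1 = S2) /\
  (* each sigma~ is an automorphism of G *)
  (forall sigma : 'S_(2 * r),
     exists2 a : {perm gT}, a \in Aut G & {in G, a =1 sigma_tilde z g sigma}) /\
  (* sigma |-> sigma~ is a homomorphism (right actions) *)
  (forall sigma tau : 'S_(2 * r), {in G, forall x,
     sigma_tilde z g (sigma * tau) x = sigma_tilde z g tau (sigma_tilde z g sigma x)}) /\
  (* injective *)
  (forall sigma tau : 'S_(2 * r),
     {in G, sigma_tilde z g sigma =1 sigma_tilde z g tau} -> sigma = tau) /\
  (* permutes the g_i *)
  (forall (sigma : 'S_(2 * r)) i, sigma_tilde z g sigma (g i) = g (sigma i)).
Proof.
split; [|split; [|split; [|split; [|split]]]];
  [ apply: ext_word_surj | apply: (ext_word_inj (G := G)) | apply: sigma_tilde_aut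
  | apply: sigma_tilde_permM | apply: sigma_tilde_inj
  | apply: (sigma_tilde_gen (G := G)) ];
  assumption.
Qed.
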